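(* Let $V$ be a finite set of variables and let $p$ be a probability distribution over $V$ faithful to an LWF chain graph $G$ with vertex set $V$, with all conditional independence queries answered correctly according to $p$. Then the graph $H^*$ produced at the end of the PC-like algorithm PC4LWF (after skeleton recovery, complex recovery and the pattern step) has the same adjacencies and the same minimal complexes as $G$.
   Context: An LWF chain graph (CG) is a graph on a finite vertex set with directed ($\to$) and undirected ($-$) edges, at most one edge between two vertices, and no partially directed cycle (a cycle $v_1,\dots,v_n,v_{n+1}\equiv v_1$, $n\ge3$, of distinct vertices with each step $v_i-v_{i+1}$ or $v_i\to v_{i+1}$ and at least one step directed). Chain components are the connected components after deleting directed edges. $bd(A)$ is the set of parents or neighbours of vertices of $A$ outside $A$; $An(A)$ is the smallest set $B\supseteq A$ with $bd(b)\subseteq B$ for all $b\in B$. The moral graph $G^m$ joins $\alpha,\beta$ iff they are adjacent in $G$ or $\alpha\to\gamma_1$, $\beta\to\gamma_2$ for some $\gamma_1,\gamma_2$ in one chain component. For disjoint $A,B,S$, $S$ c-separates $A$ from $B$ if it separates them in $(G_{An(A\cup B\cup S)})^m$. $p$ is faithful to $G$ if $A\perp\!\!\!\perp B\mid S$ in $p$ iff $S$ c-separates $A$ from $B$ in $G$. A minimal complex is an induced subgraph of the form $a\to v_1-\cdots-v_r\gets b$ ($r\ge1$). PC4LWF. Skeleton recovery: let $H$ be the complete undirected graph on $V$; for $i=0,\dots,|V|-2$, while possible select an ordered pair $(u,v)$ adjacent in the current $H$ with $|ad_H(u)\setminus\{v\}|\ge i$ ($ad_H$ = current adjacency sets); if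 some $S\subseteq ad_H(u)\setminus\{v\}$ with $|S|=i$ satisfies $u\perp\!\!\!\perp v\mid S$, set $S_{uv}=S_{vu}=S$ and remove $u-v$. Complex recovery: set $H^*=H$; for each pair $\{u,v\}$ non-adjacent in $H$ and each edge $u-w$ in $H^*$, if $u\not\perp\!\!\!\perp v\mid S_{uv}\cup\{w\}$, orient $u-w$ as $u\to w$. Pattern step: for each pair of arrows $u_1\to w_1$, $u_2\to w_2$ in $H^*$ with $u_1\ne u_2$, label both as complex arrows if there is an undirected path in $H^*$ from $w_1$ to $w_2$ none of whose intermediate vertices is adjacent to $u_1$ or $u_2$; after all pairs are examined, make every unlabeled arrow undirected. *)

From Stdlib Require Import ClassicalEpsilon.
From mathcomp Require Import all_boot.
Set Implicit Arguments. Unset Strict Implicit. Unset Printing Implicit Defensive.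

Section ChainGraphs.
Variable T : finType.

(** A graph with directed edges [d x y] (x -> y) and undirected edges [u x y] (x - y). *)
Definition adjacent (d u : rel T) (x y : T) : bool := [|| d x y, d y x | u x y].

Definition cyc_steps (p : seq T) : seq (T * T) := zip p (rot 1 p).

Definition pd_cycle (d u : rel T) (p : seq T) : bool :=
  [&& 3 <= size p, uniq p,
      all (fun e => d e.1 e.2 || u e.1 e.2) (cyc_steps p)
    & has (fun e => d e.1 e.2) (cyc_steps p)].

Definition is_LWF_CG (d u : rel T) : Prop :=
  [/\ (forall x, ~~ d x x), (forall x, ~~ u x x), (forall x y, u x y = u y x),
      (forall x y, ~~ (d x y && d y x) /\ ~~ (d x y && u x y))
    & (forall p, ~~ pd_cycle d u p)].

Definition bd (d u : rel T) (A : {set T}) : {set T} :=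
  [set x | (x \notin A) && [exists a in A, d x a || u x a]].

Definition An (d u : rel T) (A : {set T}) : {set T} :=
  [set x | [forall B : {set T},
     ((A \subset B) && [forall b in B, bd d u [set b] \subset B]) ==> (x \in B)]].

Definition same_comp (u : rel T) (W : {set T}) (x y : T) : bool :=
  connect [rel a b | [&& a \in W, b \in W & u a b]] x y.

Definition moral (d u : rel T) (W : {set T}) (x y : T) : bool :=
  [&& x \in W, y \in W, x != y &
     adjacent d u x y ||
     [exists g1, exists g2, [&& g1 \in W, g2 \in W, d x g1, d y g2 & same_comp u W g1 g2]]].

Definition c_separates (d u : rel T) (A B S : {set T}) : Prop :=
  let W := An d u (A :|: B :|: S) in
  forall a b, a \in A -> b \in B ->
    ~~ connect [rel x y | [&& x \in W :\: S, y \in W :\: S & moral d u W x y]] a b.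

(** minimal complex a -> v1 - ... - vr <- b as an induced subgraph *)
Definition consec (vs : seq T) (x y : T) : bool :=
  has (fun e => (e == (x, y)) || (e == (y, x))) (zip vs (behead vs)).

Definition min_complex (d u : rel T) (a b : T) (vs : seq T) : Prop :=
  [/\ vs != [::], uniq (a :: b :: vs) &
      forall x y, x \in a :: b :: vs -> y \in a :: b :: vs ->
        d x y = ((x == a) && (y == head a vs)) || ((x == b) && (y == last b vs))
        /\ u x y = consec vs x y].

(** CI oracle: CI A B S  means  A _||_ B | S  in p. *)
Definition ci_oracle := {set T} -> {set T} -> {set T} -> Prop.

Definition adj_set (H : rel T) (x : T) : {set T} := [set w | H x w].

Definition remove_edge (H : rel T) (u v : T) : rel T :=
  fun x y => H x y && ([set x; y] != [set u; v]).

Definition set_sep (sep : T -> T -> {set T}) (u v : T) (S : {set T}) :=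
  fun x y => if [set x; y] == [set u; v] then S else sep x y.

Definition skstate := (rel T * (T -> T -> {set T}))%type.

Inductive skel_step (CI : ci_oracle) (i : nat) : skstate -> skstate -> Prop :=
| SkStep (H : rel T) sep u v (S : {set T}) :
    H u v -> i <= #|adj_set H u :\ v| ->
    S \subset adj_set H u :\ v -> #|S| = i -> CI [set u] [set v] S ->
    skel_step CI i (H, sep) (remove_edge H u v, set_sep sep u v S).

Inductive rtc (R : skstate -> skstate -> Prop) : skstate -> skstate -> Prop :=
| rtc_refl s : rtc R s s
| rtc_step s s' s'' : R s s' -> rtc R s' s'' -> rtc R s s''.

Definition skel_level (CI : ci_oracle) (i : nat) (s s' : skstate) : Prop :=
  rtc (skel_step CI i) s s' /\ ~ (exists s'', skel_step CI i s' s'').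

Fixpoint skel_upto (CI : ci_oracle) (n : nat) (s0 s : skstate) : Prop :=
  match n with
  | 0 => s = s0
  | n'.+1 => exists s', skel_upto CI n' s0 s' /\ skel_level CI n' s' s
  end.

Definition complete_graph : rel T := fun x y => x != y.

(** skeleton recovery: levels i = 0, ..., |V|-2, starting from the complete graph *)
Definition skeleton_run (CI : ci_oracle) (H : rel T) (sep : T -> T -> {set T}) : Prop :=
  skel_upto CI #|T|.-1 (complete_graph, fun _ _ => set0) (H, sep).

(** complex recovery: the triples (u,v,w), u,v non-adjacent in H, u-w in H,
    processed once each, in an arbitrary order [ord] *)
Definition cr_order (H : rel T) (ord : seq (T * T * T)) : Prop :=
  uniq ord /\ forall t : T * T * T,
    t \in ord = [&& t.1.1 != t.1.2, ~~ H t.1.1 t.1.2 & H t.1.1 t.2].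

Definition add_arrow (A : rel T) (u w : T) : rel T :=
  fun x y => A x y || ((x == u) && (y == w)).

(** A = set of arrows of H* ; u - w is undirected in H* iff H u w, ~A u w, ~A w u *)
Inductive cr_run (CI : ci_oracle) (H : rel T) (sep : T -> T -> {set T})
  : rel T -> seq (T * T * T) -> rel T -> Prop :=
| CRnil A : cr_run CI H sep A [::] A
| CRorient A u v w l A' :
    H u w -> ~~ A u w -> ~~ A w u ->
    ~ CI [set u] [set v] (sep u v :|: [set w]) ->
    cr_run CI H sep (add_arrow A u w) l A' ->
    cr_run CI H sep A ((u, v, w) :: l) A'
| CRskip A u v w l A' :
    ~ (H u w /\ ~~ A u w /\ ~~ A w u /\ ~ CI [set u] [set v] (sep u v :|: [set w])) ->
    cr_run CI H sep A l A' ->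
    cr_run CI H sep A ((u, v, w) :: l) A'.

Definition undir (H A : rel T) : rel T := fun x y => [&& H x y, ~~ A x y & ~~ A y x].

(** undirected path in H* from w1 to w2, none of whose intermediate vertices is
    adjacent (in H*, i.e. in H) to u1 or u2 *)
Definition good_upath (H A : rel T) (u1 u2 w1 w2 : T) : Prop :=
  exists p : seq T,
    [&& path (undir H A) w1 p, last w1 p == w2, uniq (w1 :: p) &
        all (fun z => ~~ H u1 z && ~~ H u2 z) (take (size p).-1 p)].

(** complex arrows: members of a pair of arrows u1->w1, u2->w2 (u1 != u2) as above *)
Definition complex_arrow (H A : rel T) (x y : T) : Prop :=
  A x y /\ exists u' w', [/\ A u' w', x != u' &
      good_upath H A x u' y w' \/ good_upath H A u' x w' y].

(** final H*: unlabelled arrows made undirected *)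
Definition final_dir (H A : rel T) : rel T :=
  fun x y => A x y && (if excluded_middle_informative (complex_arrow H A x y) then true else false).
Definition final_und (H A : rel T) : rel T := undir H (final_dir H A).

End ChainGraphs.

From Stdlib Require Import ClassicalEpsilon.
From mathcomp Require Import all_boot.
From mathcomp Require Import zify.
Set Implicit Arguments. Unset Strict Implicit. Unset Printing Implicit Defensive.

(* If u and v are non-adjacent in G, then bd(u) or bd(v) c-separates them: choose u when no
   child of u has a semi-directed path to v, so that no child of u is an ancestor of
   {u, v} ∪ bd(u).  As bd(u) lies in the current neighbourhood of u and has at most
   |V| - 2 elements, skeleton recovery deletes every non-adjacent pair, and by faithfulness
   it deletes no adjacent one.
   Adding a parent or neighbour w of u to a separator of u and v leaves the ancestral set
   unchanged and only shrinks the moral graph, so complex recovery orients u - w only when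
   u -> w in G.  Conversely, if x -> y and x' -> y' in G with x, x' non-adjacent and y, y'
   in one chain component, then conditioning on y marries x and x', so x -> y is oriented.
   Hence the arrows of a minimal complex of G are labelled by the pattern step.  Finally,
   if an inner edge of a minimal complex of H* were directed in G, an innermost pair of
   opposite G-arrows along the complex would be labelled as well, giving H* an arrow
   strictly inside the complex. *)

Lemma innermost_pair (P Q : pred nat) i0 j0 : i0 < j0 -> P i0 -> Q j0 ->
  exists i j, [/\ i0 <= i, i < j <= j0, P i, Q j &
                 forall k, i < k < j -> ~~ P k && ~~ Q k].
Proof.
move=> i0j0 Pi0 Qj0.
have exQ : exists j, [&& i0 < j, j <= j0 & Q j] by exists j0; rewrite i0j0 leqnn.
have [j /and3P [i0j jj0 Qj] jmin] := ex_minnP exQ.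
have exP : exists i, [&& i0 <= i, i < j & P i] by exists i0; rewrite leqnn i0j.
have ubP i : [&& i0 <= i, i < j & P i] -> i <= j by case/and3P => _ /ltnW.
have [i /and3P [i0i ij Pi] imax] := ex_maxnP exP ubP.
exists i, j; split => //; first by rewrite ij.
move=> k /andP [ik kj]; apply/andP; split; apply/negP.
  move=> Pk; suff /imax : [&& i0 <= k, k < j & P k] by lia.
  by rewrite Pk kj (leq_trans i0i (ltnW ik)).
move=> Qk; suff /jmin : [&& i0 < k, k <= j0 & Q k] by lia.
by rewrite Qk (leq_ltn_trans i0i ik) (leq_trans (ltnW kj) jj0).
Qed.

Lemma mem_zip_behead (T : eqType) (x0 : T) (s : seq T) x y :
  reflect (exists2 k, k.+1 < size s & x = nth x0 s k /\ y = nth x0 s k.+1)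
          ((x, y) \in zip s (behead s)).
Proof.
have sz : size (zip s (behead s)) = (size s).-1 by rewrite size_zip size_behead; lia.
apply: (iffP (nthP (x0, x0))) => [[k] | [k lt [-> ->]]].
  rewrite sz nth_zip_cond sz => lt; rewrite lt nth_behead => -[<- <-].
  by exists k => //; lia.
exists k; first by rewrite sz; lia.
by rewrite nth_zip_cond sz nth_behead ifT //; lia.
Qed.

Lemma path_map_iota (T : Type) (e : rel T) (f : nat -> T) i m :
  (forall k, i <= k < i + m -> e (f k) (f k.+1)) -> path e (f i) (map f (iota i.+1 m)).
Proof.
elim: m i => [|m IH] i //= he; apply/andP; split; first by apply: he; lia.
by apply: IH => k hk; apply: he; lia.
Qed.

Lemma last_map_iota (T : Type) (f : nat -> T) i m :
  last (f i) (map f (iota i.+1 m)) = f (i + m).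
Proof. by elim: m i => [|m IH] i /=; rewrite ?addn0 // IH addSnnS. Qed.

Lemma all_zip_rcons (T : Type) (f : pred (T * T)) y p z :
  all f (zip (y :: p) (rcons p z)) = path (fun a b => f (a, b)) y (rcons p z).
Proof. by elim: p y => [|a p IH] y //=; rewrite IH. Qed.

Lemma last_step_zip_rcons (T : eqType) (y z : T) p :
  (last y p, z) \in zip (y :: p) (rcons p z).
Proof. by elim: p y => [|a p IH] y /=; rewrite inE ?eqxx // IH orbT. Qed.

(** * Minimal complexes *)

Section ComplexVertices.
Variables (T : finType) (d u : rel T) (a b : T) (vs : seq T).

Local Notation n := (size vs).
Local Notation mc_dir x y := (((x == a) && (y == head a vs)) || ((x == b) && (y == last b vs))).

(* The vertices a, v_1, ..., v_n, b of a complex, so that its k-th edge joins cvert k and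
   cvert k.+1. *)
Definition cvert k := nth a (a :: rcons vs b) k.

Lemma cvert0 : cvert 0 = a. Proof. by []. Qed.

Lemma cvert_last : cvert n.+1 = b.
Proof. by rewrite /cvert /= nth_rcons ltnn eqxx. Qed.

Lemma cvertS k : k < n -> cvert k.+1 = nth a vs k.
Proof. by rewrite /cvert /= nth_rcons => ->. Qed.

Lemma cvert_mem k : k <= n.+1 -> cvert k \in [:: a, b & vs].
Proof.
move=> le_k; have : cvert k \in a :: rcons vs b by apply: mem_nth; rewrite /= size_rcons.
by rewrite !inE mem_rcons inE; case/or3P => ->; rewrite ?orbT.
Qed.

Lemma consec_mem x y : consec vs x y -> x \in vs /\ y \in vs.
Proof.
case/hasP => -[x' y'] /(mem_zip_behead a) [k lt_k [-> ->]].
by case/orP => /eqP [<- <-]; rewrite !mem_nth //; lia.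
Qed.

Hypothesis hmc : min_complex d u a b vs.

Lemma size_complex_gt0 : 0 < n.
Proof. by case: hmc; rewrite lt0n size_eq0. Qed.

Lemma uniq_complex_seq : uniq (a :: rcons vs b).
Proof.
case: hmc => _ uq _; rewrite (perm_uniq (_ : perm_eq _ (a :: b :: vs))) //.
by rewrite perm_cons perm_rcons.
Qed.

Lemma cvert_inj i j : i <= n.+1 -> j <= n.+1 -> (cvert i == cvert j) = (i == j).
Proof.
have sz : size (a :: rcons vs b) = n.+2 by rewrite /= size_rcons.
by move=> le_i le_j; rewrite nth_uniq ?sz ?uniq_complex_seq.
Qed.

Lemma head_cvert : head a vs = cvert 1.
Proof. by rewrite cvertS ?size_complex_gt0 // nth0. Qed.

Lemma last_cvert : last b vs = cvert n.
Proof.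
have := size_complex_gt0; case def_n: n => [|m] // _.
by rewrite cvertS ?def_n // (set_nth_default b) ?def_n // -nth_last def_n.
Qed.

Lemma mc_dir_cvert i j : i <= n.+1 -> j <= n.+1 ->
  mc_dir (cvert i) (cvert j) = ((i == 0) && (j == 1)) || ((i == n.+1) && (j == n)).
Proof.
move=> le_i le_j; have := size_complex_gt0.
by rewrite head_cvert last_cvert -{1}cvert0 -{1}cvert_last !cvert_inj //; lia.
Qed.

Lemma consec_cvert x y : consec vs x y -> exists2 k, 0 < k < n &
  (x = cvert k /\ y = cvert k.+1) \/ (x = cvert k.+1 /\ y = cvert k).
Proof.
case/hasP => -[x' y'] /(mem_zip_behead a) [k lt_k [-> ->]].
rewrite -!cvertS //; last exact: ltnW.
by case/orP => /eqP [<- <-]; exists k.+1; auto.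
Qed.

Lemma cvert_consec k : 0 < k < n -> consec vs (cvert k) (cvert k.+1).
Proof.
case: k => // k /andP [_ lt_k]; apply/hasP; exists (cvert k.+1, cvert k.+2); last by rewrite eqxx.
by rewrite !cvertS ?(ltnW lt_k) //; apply/(mem_zip_behead a); exists k.
Qed.

Lemma min_complex_dir i j : i <= n.+1 -> j <= n.+1 ->
  d (cvert i) (cvert j) = ((i == 0) && (j == 1)) || ((i == n.+1) && (j == n)).
Proof.
move=> le_i le_j; case: hmc => _ _ /(_ _ _ (cvert_mem le_i) (cvert_mem le_j)) [-> _].
exact: mc_dir_cvert.
Qed.

Lemma min_complex_und k : 0 < k < n -> u (cvert k) (cvert k.+1).
Proof.
move=> lt_k; have le_k : k <= n.+1 by lia.
have le_k1 : k.+1 <= n.+1 by lia.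
case: hmc => _ _ /(_ _ _ (cvert_mem le_k) (cvert_mem le_k1)) [_ ->].
exact: cvert_consec.
Qed.

Lemma min_complex_adjacent i j : i <= n.+1 -> j <= n.+1 ->
  adjacent d u (cvert i) (cvert j) -> (j == i.+1) || (i == j.+1).
Proof.
move=> le_i le_j; rewrite /adjacent !min_complex_dir //.
case: hmc => _ _ /(_ _ _ (cvert_mem le_i) (cvert_mem le_j)) [_ ->].
case/or3P => [| | /consec_cvert [k lt_k [] [/eqP + /eqP]]].
- by case/orP => /andP [/eqP -> /eqP ->]; rewrite eqxx ?orbT.
- by case/orP => /andP [/eqP -> /eqP ->]; rewrite eqxx ?orbT.
all: rewrite !cvert_inj //; lia.
Qed.

Lemma min_complex_adjacent_next k : k <= n -> adjacent d u (cvert k) (cvert k.+1).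
Proof.
move=> le_k; have le_k1 := leqW le_k; rewrite /adjacent !min_complex_dir //.
have [-> | k_gt0] := posnP k; first by rewrite eqxx.
have [lt_kn | ->] : k < n \/ k = n by lia.
  by rewrite min_complex_und ?k_gt0 ?lt_kn ?orbT.
by rewrite !eqxx !orbT.
Qed.

Lemma min_complex_head : d a (head a vs).
Proof. by rewrite head_cvert -{1}cvert0 min_complex_dir. Qed.

Lemma min_complex_last : d b (last b vs).
Proof. by rewrite last_cvert -{1}cvert_last min_complex_dir ?eqxx ?orbT ?leqnSn. Qed.

Lemma min_complex_consec x y : consec vs x y -> u x y.
Proof.
move=> cxy; have [xv yv] := consec_mem cxy.
by case: hmc => _ _ /(_ x y); rewrite !inE xv yv !orbT => /(_ isT isT) [_ ->].
Qed.

End ComplexVertices.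

Lemma min_complex_transfer (T : finType) (d1 u1 d2 u2 : rel T) a b vs :
  min_complex d1 u1 a b vs ->
  (forall x y, d2 x y -> ~~ d2 y x && ~~ u2 x y) -> symmetric u2 ->
  adjacent d2 u2 =2 adjacent d1 u1 ->
  d2 a (head a vs) -> d2 b (last b vs) -> (forall x y, consec vs x y -> u2 x y) ->
  min_complex d2 u2 a b vs.
Proof.
move=> [vs_ne uq spec1] excl2 sym2 adj21 d2a d2b u2_consec; split => // x y xL yL.
have dir2 z z' : ((z == a) && (z' == head a vs)) || ((z == b) && (z' == last b vs)) -> d2 z z'.
  by case/orP => /andP [/eqP -> /eqP ->].
have [dxy uxy] := spec1 x y xL yL; have [dyx _] := spec1 y x yL xL.
have adj2 := adj21 x y; rewrite /adjacent dxy dyx uxy in adj2.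
split; apply/idP/idP; [move=> d2xy | exact: dir2 | move=> u2xy | exact: u2_consec].
  have /andP [nd2yx nu2xy] := excl2 _ _ d2xy.
  rewrite d2xy in adj2; case/or3P: (esym adj2) => [// | /dir2 d2yx | /u2_consec u2xy].
    by rewrite d2yx in nd2yx.
  by rewrite u2xy in nu2xy.
rewrite u2xy !orbT in adj2; case/or3P: (esym adj2) => [/dir2 d2xy | /dir2 d2yx | //].
  by have := excl2 _ _ d2xy; rewrite u2xy andbF.
by have := excl2 _ _ d2yx; rewrite sym2 u2xy andbF.
Qed.

(** * Chain graphs and c-separation *)

Section ChainGraph.
Variables (T : finType) (gd gu : rel T).
Hypothesis hG : is_LWF_CG gd gu.

Local Notation adj := (adjacent gd gu).
Local Notation An := (An gd gu).
Local Notation bd := (bd gd gu).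
Local Notation csep := (c_separates gd gu).

Definition semi_step : rel T := fun x y => gd x y || gu x y.

Lemma gd_irrefl x : gd x x = false.
Proof. by case: hG => h _ _ _ _; apply/negbTE. Qed.

Lemma gu_irrefl x : gu x x = false.
Proof. by case: hG => _ h _ _ _; apply/negbTE. Qed.

Lemma gu_sym : symmetric gu.
Proof. by case: hG. Qed.

Lemma gd_asym x y : gd x y -> gd y x = false.
Proof. by case: hG => _ _ _ h _ dxy; have [/nandP [] /negbTE] := h x y; rewrite ?dxy. Qed.

Lemma gd_not_gu x y : gd x y -> gu x y = false.
Proof. by case: hG => _ _ _ h _ dxy; have [_ /nandP [] /negbTE] := h x y; rewrite ?dxy. Qed.

Lemma gd_not_gu_rev x y : gd x y -> gu y x = false.
Proof. by rewrite gu_sym; apply: gd_not_gu. Qed.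

Lemma adjacent_sym : symmetric adj.
Proof. by move=> x y; rewrite /adjacent gu_sym orbCA. Qed.

Lemma adjacent_neq x y : adj x y -> x != y.
Proof. by apply: contraTN => /eqP ->; rewrite /adjacent gd_irrefl gu_irrefl. Qed.

Lemma gu_adjacent x y : gu x y = [&& adj x y, ~~ gd x y & ~~ gd y x].
Proof.
rewrite /adjacent; case dxy: (gd x y); first by rewrite gd_not_gu.
by case dyx: (gd y x); [rewrite gd_not_gu_rev | rewrite andbT].
Qed.

Lemma no_semidirected_cycle x y : gd x y -> ~~ connect semi_step y x.
Proof.
move=> dxy; apply/negP => /connectP [p0 p0_path p0_last]; subst x; move: dxy.
case: (shortenP p0_path) => p p_path p_uniq _ dxy.
have cyc : pd_cycle gd gu (y :: p).
  rewrite /pd_cycle /cyc_steps rot1_cons p_uniq all_zip_rcons rcons_path p_path.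
  rewrite /= dxy; apply/andP; split.
    case: p p_path p_uniq dxy => [|z [|z' p]] //= + _ dzy.
      by rewrite gd_irrefl in dzy.
    by rewrite /semi_step (gd_asym dzy) (gd_not_gu_rev dzy).
  by apply/hasP; exists (last y p, y); first exact: last_step_zip_rcons.
by case: hG => _ _ _ _ /(_ (y :: p)); rewrite cyc.
Qed.

Lemma bd1E b y : (y \in bd [set b]) = semi_step y b.
Proof.
rewrite inE; apply/andP/idP => [[_ /existsP [a /andP [/set1P -> //]]] | syb].
split; last by apply/existsP; exists b; rewrite set11.
by apply: contraTN syb => /set1P ->; rewrite /semi_step gd_irrefl gu_irrefl.
Qed.

Lemma bd1_adjacent b y : y \in bd [set b] -> adj b y.
Proof. by rewrite bd1E /adjacent gu_sym => /orP [] ->; rewrite ?orbT. Qed.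

Lemma card_bd1_lt u v : u != v -> ~~ adj u v -> #|bd [set u]| < #|T|.-1.
Proof.
move=> nuv nadj; have vCu : v \in [set~ u] by rewrite !inE eq_sym.
have sub : bd [set u] \subset [set~ u] :\ v.
  apply/subsetP => z zbd; rewrite !inE; apply/andP; split.
    by apply: contraNneq nadj => <-; apply: bd1_adjacent zbd.
  by apply: adjacent_neq; rewrite adjacent_sym; apply: bd1_adjacent.
have := subset_leq_card sub; have := cardsD1 v [set~ u].
by rewrite vCu cardsC1; lia.
Qed.

Lemma An_min (X B : {set T}) :
  X \subset B -> (forall b y, b \in B -> semi_step y b -> y \in B) -> An X \subset B.
Proof.
move=> sXB closedB; apply/subsetP => x; rewrite inE => /forallP /(_ B) /implyP; apply.
rewrite sXB; apply/forallP => b; apply/implyP => bB.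
by apply/subsetP => y; rewrite bd1E; apply: closedB.
Qed.

Lemma subset_An (X : {set T}) : X \subset An X.
Proof.
apply/subsetP => x xX; rewrite inE; apply/forallP => B.
by apply/implyP => /andP [/subsetP sXB _]; apply: sXB.
Qed.

Lemma An_closed (X : {set T}) b y : b \in An X -> semi_step y b -> y \in An X.
Proof.
rewrite !inE => /forallP Anb syb; apply/forallP => B; apply/implyP => closedB.
have /andP [_ /forallP /(_ b) /implyP bdB] := closedB.
by apply: (subsetP (bdB (implyP (Anb B) closedB))); rewrite bd1E.
Qed.

Lemma An_connect (X : {set T}) x : x \in An X -> exists2 z, z \in X & connect semi_step x z.
Proof.
set B := [set y | [exists z in X, connect semi_step y z]].
have /subsetP AnB : An X \subset B.
  apply: An_min => [|b y].
    by apply/subsetP => y yX; rewrite inE; apply/existsP; exists y; rewrite yX connect0.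
  rewrite !inE => /existsP [z /andP [zX bz]] syb; apply/existsP; exists z.
  by rewrite zX (connect_trans (connect1 syb) bz).
by move=> /AnB; rewrite inE => /existsP [z /andP [zX xz]]; exists z.
Qed.

Lemma An_setU (X Y : {set T}) : Y \subset An X -> An (X :|: Y) = An X.
Proof.
move=> sYAn; apply/eqP; rewrite eqEsubset; apply/andP; split; apply: An_min; try exact: An_closed.
  by rewrite subUset subset_An.
exact: subset_trans (subsetUl X Y) (subset_An _).
Qed.

Lemma connect_gu_An (X : {set T}) y y' : y \in An X -> connect gu y y' ->
  y' \in An X /\ same_comp gu (An X) y y'.
Proof.
move=> yAn /connectP [p p_path ->] {y'}.
elim: p y yAn p_path => [|z p IH] y yAn /=; first by rewrite /same_comp connect0.
case/andP => uyz z_path.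
have zAn : z \in An X by apply: An_closed yAn _; rewrite /semi_step gu_sym uyz orbT.
have [-> comp_z] := IH z zAn z_path; split => //.
by apply: connect_trans comp_z; apply: connect1; rewrite /= yAn zAn.
Qed.

Lemma moral_sym (W : {set T}) : symmetric (moral gd gu W).
Proof.
suff imp x y : moral gd gu W x y -> moral gd gu W y x by move=> x y; apply/idP/idP; apply: imp.
case/and4P => xW yW nxy /orP [adj_xy | /existsP [g1 /existsP [g2 /and5P [g1W g2W d1 d2 comp]]]].
  by rewrite /moral xW yW eq_sym nxy adjacent_sym adj_xy.
rewrite /moral xW yW eq_sym nxy; apply/orP; right.
apply/existsP; exists g2; apply/existsP; exists g1.
rewrite g1W g2W d1 d2 /=; move: comp; rewrite /same_comp sym_connect_sym //.
by move=> a b /=; rewrite gu_sym andbCA.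
Qed.

Lemma c_separates_sym (A B S : {set T}) : csep A B S -> csep B A S.
Proof.
rewrite /c_separates [B :|: A]setUC => sepAB b a bB aA.
rewrite sym_connect_sym; first exact: sepAB.
by move=> x y /=; rewrite moral_sym andbCA.
Qed.

Lemma moral_not_c_separates x y (S : {set T}) : x \notin S -> y \notin S ->
  moral gd gu (An ([set x] :|: [set y] :|: S)) x y -> ~ csep [set x] [set y] S.
Proof.
move=> xS yS mxy /(_ x y (set11 x) (set11 y)); apply/negP/negPn/connect1.
by case/and3P: (mxy) => xW yW _; rewrite /= !in_setD xS yS xW yW mxy.
Qed.

Lemma in_An_pair x y (S : {set T}) :
  (x \in An ([set x] :|: [set y] :|: S)) && (y \in An ([set x] :|: [set y] :|: S)).
Proof. by rewrite !(subsetP (subset_An _)) // !inE eqxx ?orbT. Qed.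

Lemma adjacent_not_c_separates x y (S : {set T}) :
  adj x y -> x \notin S -> y \notin S -> ~ csep [set x] [set y] S.
Proof.
move=> adj_xy xS yS; apply: moral_not_c_separates => //.
by case/andP: (in_An_pair x y S) => xW yW; rewrite /moral xW yW adjacent_neq // adj_xy.
Qed.

Lemma married_not_c_separates x x' y y' (S : {set T}) :
  gd x y -> gd x' y' -> connect gu y y' -> x != x' ->
  x \notin S -> x' \notin S -> y \in S -> ~ csep [set x] [set x'] S.
Proof.
move=> dxy dxy' yy' nxx' xS x'S yS; apply: moral_not_c_separates => //.
case/andP: (in_An_pair x x' S) => xW x'W.
have yW : y \in An ([set x] :|: [set x'] :|: S) by rewrite (subsetP (subset_An _)) // inE yS orbT.
have [y'W comp] := connect_gu_An yW yy'.
rewrite /moral xW x'W nxx'; apply/orP; right; apply/existsP; exists y; apply/existsP; exists y'.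
by rewrite yW y'W dxy dxy'.
Qed.

Lemma c_separates_bd u v : u != v -> ~~ adj u v ->
  (forall c, gd u c -> ~~ connect semi_step c v) -> csep [set u] [set v] (bd [set u]).
Proof.
move=> nuv nadj no_path W _ _ /set1P -> /set1P ->.
have child_notin c : gd u c -> c \notin W.
  move=> duc; apply/negP => /An_connect [z].
  case/setUP => [/setUP [] /set1P -> | zu] cz.
  - by have := no_semidirected_cycle duc; rewrite cz.
  - by have := no_path c duc; rewrite cz.
  have := no_semidirected_cycle duc.
  by rewrite (connect_trans cz (connect1 (_ : semi_step z u))) // -bd1E.
have isolated z : z \notin bd [set u] -> ~~ moral gd gu W u z.
  rewrite bd1E /semi_step gu_sym => /norP [ndzu nuuz].
  apply/negP => /and4P [_ zW _ /orP [/or3P [duz | dzu | uuz] | /existsP [g1 /existsP [g2]]]].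
  - by rewrite (negbTE (child_notin z duz)) in zW.
  - by rewrite dzu in ndzu.
  - by rewrite uuz in nuuz.
  by case/and5P => g1W _ dug1; rewrite (negbTE (child_notin g1 dug1)) in g1W.
apply/negP => /connectP [[_ /eqP | z p] /=]; first by rewrite eq_sym (negbTE nuv).
by case/andP => /and3P [_ /setDP [_ zS] muz] _ _; move: muz; apply/negP/isolated.
Qed.

Lemma c_separates_bd_either u v : u != v -> ~~ adj u v ->
  csep [set u] [set v] (bd [set u]) \/ csep [set v] [set u] (bd [set v]).
Proof.
move=> nuv nadj.
have [no_path | /forallPn [c]] := boolP [forall c, gd u c ==> ~~ connect semi_step c v].
  by left; apply: c_separates_bd => // c; apply/implyP/(forallP no_path).
rewrite negb_imply negbK => /andP [duc cv].
right; apply: c_separates_bd; rewrite 1?eq_sym 1?adjacent_sym // => c' dvc'.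
apply/negP => c'u; have := no_semidirected_cycle duc; apply/negP/negPn.
have vc' : semi_step v c' by rewrite /semi_step dvc'.
by rewrite (connect_trans cv (connect_trans (connect1 vc') c'u)).
Qed.

Lemma c_separates_setU_bd u v (S : {set T}) w :
  csep [set u] [set v] S -> w \in bd [set u] -> csep [set u] [set v] (S :|: [set w]).
Proof.
move=> sepS wbd; rewrite /c_separates setUA An_setU; last first.
  apply/subsetP => _ /set1P ->; apply: An_closed (_ : u \in _) _; last by rewrite -bd1E.
  by rewrite (subsetP (subset_An _)) // !inE eqxx.
move=> a b aU bV; apply: contraNN (sepS a b aU bV); apply: connect_sub => x y /= /and3P [xW yW mxy].
by apply: connect1; rewrite /= mxy !(subsetP (setDS _ (subsetUl S [set w]))).
Qed.

End ChainGraph.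

(** * Skeleton recovery *)

Lemma eq_set2 (T : finType) (x y u v : T) :
  [set x; y] = [set u; v] -> (x = u /\ y = v) \/ (x = v /\ y = u).
Proof.
move=> e.
have /set2P xuv : x \in [set u; v] by rewrite -e set21.
have /set2P yuv : y \in [set u; v] by rewrite -e set22.
have /set2P uxy : u \in [set x; y] by rewrite e set21.
have /set2P vxy : v \in [set x; y] by rewrite e set22.
by case: xuv yuv uxy vxy => -> [] -> [] ? [] ?; subst; auto.
Qed.

Section Skeleton.
Variables (T : finType) (gd gu : rel T) (CI : ci_oracle T).
Hypothesis hG : is_LWF_CG gd gu.
Hypothesis faithful : forall A B S : {set T},
  [disjoint A & B] -> [disjoint A & S] -> [disjoint B & S] ->
  (CI A B S <-> c_separates gd gu A B S).

Local Notation adj := (adjacent gd gu).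
Local Notation csep := (c_separates gd gu).

Lemma CI_pair u v (S : {set T}) : u != v -> u \notin S -> v \notin S ->
  CI [set u] [set v] S <-> csep [set u] [set v] S.
Proof. by move=> nuv uS vS; apply: faithful; rewrite ?disjoints1 // inE. Qed.

Definition skeleton_inv (s : skstate T) : Prop :=
  [/\ irreflexive s.1, symmetric s.1, subrel adj s.1 &
      forall x y, x != y -> ~~ s.1 x y ->
        [/\ csep [set x] [set y] (s.2 x y), x \notin s.2 x y & y \notin s.2 x y]].

Definition saturated i (s : skstate T) : Prop := ~ exists s', skel_step CI i s s'.

Lemma skeleton_inv_complete : skeleton_inv (@complete_graph T, fun _ _ => set0).
Proof.
split => /= [x | x y | x y /(adjacent_neq hG) // | x y nxy];
  by rewrite /complete_graph ?eqxx ?nxy // eq_sym.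
Qed.

Lemma skel_step_inv i s s' : skel_step CI i s s' -> skeleton_inv s ->
  skeleton_inv s' /\ subrel s'.1 s.1.
Proof.
case=> H sep u v S Huv _ sub _ ci; case=> /= irrH symH adjH sepH.
have nuv : u != v by apply: contraTneq Huv => ->; rewrite irrH.
have uS : u \notin S by apply/negP => /(subsetP sub); rewrite !inE irrH andbF.
have vS : v \notin S by apply/negP => /(subsetP sub); rewrite !inE eqxx.
have sepS : csep [set u] [set v] S by apply/CI_pair.
have nadj : ~~ adj u v by apply/negP => /(adjacent_not_c_separates hG)/(_ uS vS).
split; last by move=> x y /andP [].
split => /= [x | x y | x y adj_xy | x y nxy].
- by rewrite /remove_edge irrH.
- by rewrite /remove_edge symH setUC.
- rewrite /remove_edge adjH //=; apply/negP => /eqP /eq_set2 [] [? ?]; subst.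
    by rewrite adj_xy in nadj.
  by rewrite (adjacent_sym hG) adj_xy in nadj.
rewrite /set_sep /remove_edge; case: eqP => [/eq_set2 [] [? ?] _ | _ ]; subst => //.
  by split => //; apply: c_separates_sym.
by rewrite andbT; apply: sepH.
Qed.

Lemma skel_rtc_inv i s s' : rtc (skel_step CI i) s s' -> skeleton_inv s ->
  skeleton_inv s' /\ subrel s'.1 s.1.
Proof.
elim=> [s0 inv0 | s0 s1 s2 st _ IH inv0]; first by split.
have [inv1 sub1] := skel_step_inv st inv0.
have [inv2 sub2] := IH inv1.
by split => // x y /sub2 /sub1.
Qed.

Lemma skel_upto_inv n s0 s : skel_upto CI n s0 s -> skeleton_inv s0 ->
  skeleton_inv s /\
  forall i, i < n -> exists2 s', skeleton_inv s' /\ saturated i s' & subrel s.1 s'.1.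
Proof.
elim: n s => [|n IH] s /=; first by move=> -> inv0; split.
case=> s1 [run1 [rtc1 sat1]] inv0.
have [inv1 levels1] := IH _ run1 inv0.
have [inv sub] := skel_rtc_inv rtc1 inv1.
split => // i; rewrite ltnS leq_eqVlt => /predU1P [-> | lt_in]; first by exists s.
have [s' inv_sat' sub'] := levels1 i lt_in.
by exists s' => // x y /sub /sub'.
Qed.

Lemma skel_step_bd (s : skstate T) u v : skeleton_inv s -> s.1 u v -> ~~ adj u v ->
  csep [set u] [set v] (bd gd gu [set u]) -> exists s', skel_step CI #|bd gd gu [set u]| s s'.
Proof.
case: s => H sep [/= irrH _ adjH _] Huv nadj sep_bd.
have nuv : u != v by apply: contraTneq Huv => ->; rewrite irrH.
have uS : u \notin bd gd gu [set u] by rewrite (bd1E hG) /semi_step (gd_irrefl hG) (gu_irrefl hG).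
have vS : v \notin bd gd gu [set u] by apply: contra nadj; apply: bd1_adjacent.
have sub : bd gd gu [set u] \subset adj_set H u :\ v.
  apply/subsetP => z zbd; rewrite !inE adjH ?andbT; last exact: bd1_adjacent zbd.
  by apply: contraNneq vS => <-.
by eexists; apply: SkStep (subset_leq_card sub) sub _ _ => //; apply/CI_pair.
Qed.

Lemma skeleton_run_adjacent H sep : skeleton_run CI H sep ->
  skeleton_inv (H, sep) /\ H =2 adj.
Proof.
move=> run; have [inv levels] := skel_upto_inv run skeleton_inv_complete.
split => // x y; apply/idP/idP; last by case: inv => _ _ adjH _; apply: adjH.
case: inv => /= irrH symH _ _ Hxy; apply/negPn/negP => nadj.
have nxy : x != y by apply: contraTneq Hxy => ->; rewrite irrH.
wlog sep_bd : x y Hxy nadj nxy / csep [set x] [set y] (bd gd gu [set x]).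
  move=> IH; have [|sep_yx] := c_separates_bd_either hG nxy nadj; first exact: IH.
  by apply: (IH y x _ _ _ sep_yx); rewrite 1?symH 1?adjacent_sym 1?eq_sym.
have [s' [inv' sat'] sub'] := levels _ (card_bd1_lt hG nxy nadj).
by apply: sat'; apply: skel_step_bd inv' (sub' _ _ Hxy) nadj sep_bd.
Qed.

End Skeleton.

(** * Complex recovery and the pattern step *)

Definition cr_triple (T : finType) (H : rel T) (t : T * T * T) : bool :=
  [&& t.1.1 != t.1.2, ~~ H t.1.1 t.1.2 & H t.1.1 t.2].

Lemma final_dirP (T : finType) (H A : rel T) x y :
  reflect (complex_arrow H A x y) (final_dir H A x y).
Proof.
rewrite /final_dir; case: excluded_middle_informative => [ca | nca].
  by rewrite ca.1; constructor.
by rewrite andbF; constructor.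
Qed.

Section ComplexRecovery.
Variables (T : finType) (gd gu : rel T) (CI : ci_oracle T).
Hypothesis hG : is_LWF_CG gd gu.
Hypothesis faithful : forall A B S : {set T},
  [disjoint A & B] -> [disjoint A & S] -> [disjoint B & S] ->
  (CI A B S <-> c_separates gd gu A B S).
Variables (H : rel T) (sep : T -> T -> {set T}).
Hypothesis H_adj : H =2 adjacent gd gu.
Hypothesis sepH : forall x y, x != y -> ~~ H x y ->
  [/\ c_separates gd gu [set x] [set y] (sep x y), x \notin sep x y & y \notin sep x y].

Local Notation adj := (adjacent gd gu).

Lemma cr_run_mono A0 l A' : cr_run CI H sep A0 l A' -> subrel A0 A'.
Proof.
elim=> {A0 l A'} [A0 x y // | A0 u v w l A' _ _ _ _ _ IH x y A0xy | //].
by apply: IH; rewrite /add_arrow A0xy.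
Qed.

Lemma oriented_gd u v w : cr_triple H (u, v, w) ->
  ~ CI [set u] [set v] (sep u v :|: [set w]) -> gd u w.
Proof.
case/and3P => /= nuv nHuv Huw nCI; have [// | ndu] := boolP (gd u w).
have wbd : w \in bd gd gu [set u].
  by move: Huw; rewrite H_adj (bd1E hG) /adjacent /semi_step (negbTE ndu) (gu_sym hG).
have [sep_uv uS vS] := sepH nuv nHuv.
have nuw : u != w by apply: (adjacent_neq hG); rewrite -H_adj.
have nvw : v != w by apply: contraNneq nHuv => ->.
exfalso; apply: nCI; apply/(CI_pair faithful nuv).
- by rewrite in_setU in_set1 negb_or uS.
- by rewrite in_setU in_set1 negb_or vS.
exact: c_separates_setU_bd.
Qed.

Lemma cr_run_sound A0 l A' : cr_run CI H sep A0 l A' ->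
  subrel A0 gd -> all (cr_triple H) l -> subrel A' gd.
Proof.
elim=> {A0 l A'} // [A0 u v w l A' _ _ _ nCI _ IH | A0 u v w l A' _ _ IH] A0gd /andP [t_ok l_ok].
  apply: IH l_ok => x y /orP [/A0gd // | /andP [/eqP -> /eqP ->]].
  exact: oriented_gd t_ok nCI.
exact: IH.
Qed.

Lemma cr_run_complete A0 l A' : cr_run CI H sep A0 l A' -> subrel A' gd ->
  forall u v w, (u, v, w) \in l -> H u w -> gd u w ->
  ~ CI [set u] [set v] (sep u v :|: [set w]) -> A' u w.
Proof.
elim=> {A0 l A'} // [A0 u0 v0 w0 l A' _ _ _ _ run IH | A0 u0 v0 w0 l A' skip run IH] A'gd u v w.
  rewrite inE => /predU1P [[-> _ ->] | tl] Huw duw nCI; last exact: IH tl Huw duw nCI.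
  by apply: (cr_run_mono run); rewrite /add_arrow !eqxx orbT.
rewrite inE => /predU1P [[-> -> ->] | tl] Huw duw nCI; last exact: IH tl Huw duw nCI.
have [/(cr_run_mono run) // | nA0uw] := boolP (A0 u0 w0).
have [/(cr_run_mono run) /A'gd | nA0wu] := boolP (A0 w0 u0); first by rewrite (gd_asym hG duw).
by exfalso; apply: skip.
Qed.

Variables (ord : seq (T * T * T)) (A : rel T).
Hypothesis hord : cr_order H ord.
Hypothesis hrun : cr_run CI H sep (fun _ _ => false) ord A.

Lemma cr_arrows_gd : subrel A gd.
Proof. by apply: (cr_run_sound hrun) => //; apply/allP => t; rewrite hord.2. Qed.

Lemma married_arrow_oriented x x' y y' : gd x y -> gd x' y' -> x != x' -> ~~ adj x x' ->
  connect gu y y' -> A x y.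
Proof.
move=> dxy dxy' nxx' nadj yy'.
have nHxx' : ~~ H x x' by rewrite H_adj.
have Hxy : H x y by rewrite H_adj /adjacent dxy.
have [_ xS x'S] := sepH nxx' nHxx'.
have nxy : x != y by apply: (adjacent_neq hG); rewrite -H_adj.
have nx'y : x' != y by apply: contraNneq nadj => ->; rewrite -H_adj.
apply: (cr_run_complete hrun cr_arrows_gd (v := x') _ Hxy dxy).
  by rewrite hord.2 /= nxx' nHxx' Hxy.
have xS' : x \notin sep x x' :|: [set y] by rewrite in_setU in_set1 negb_or xS.
have x'S' : x' \notin sep x x' :|: [set y] by rewrite in_setU in_set1 negb_or x'S.
move/(CI_pair faithful nxx' xS' x'S').
by apply: (married_not_c_separates hG dxy dxy' yy' nxx' xS' x'S'); rewrite in_setU set11 orbT.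
Qed.

Lemma gu_undir (B : rel T) x y : subrel B gd -> gu x y -> undir H B x y.
Proof.
move=> Bgd uxy; rewrite /undir H_adj /adjacent uxy !orbT /=.
apply/andP; split; apply/negP => /Bgd dxy; move: uxy.
  by rewrite (gd_not_gu hG dxy).
by rewrite (gd_not_gu_rev hG dxy).
Qed.

Local Notation fd := (final_dir H A).
Local Notation fu := (final_und H A).

Lemma final_dir_gd : subrel fd gd.
Proof. by move=> x y /andP [/cr_arrows_gd]. Qed.

Lemma final_adjacent : adjacent fd fu =2 adj.
Proof.
move=> x y; rewrite -H_adj /adjacent /final_und /undir.
case fxy: (fd x y); first by rewrite H_adj (adjacent_sym hG) /adjacent (final_dir_gd fxy) ?orbT.
case fyx: (fd y x); first by rewrite H_adj /adjacent (final_dir_gd fyx) ?orbT.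
by rewrite /= andbT.
Qed.

Lemma final_und_sym : symmetric fu.
Proof.
move=> x y; rewrite /final_und /undir !H_adj (adjacent_sym hG y x).
by congr (_ && _); rewrite andbC.
Qed.

Lemma pattern_arrows_labelled x x' y y' p : gd x y -> gd x' y' -> x != x' -> ~~ adj x x' ->
  path gu y p -> last y p = y' -> uniq (y :: p) ->
  all (fun z => ~~ adj x z && ~~ adj x' z) (take (size p).-1 p) ->
  fd x y /\ fd x' y'.
Proof.
move=> dxy dxy' nxx' nadj p_path p_last p_uniq p_far.
have yy' : connect gu y y' by apply/connectP; exists p.
have Axy := married_arrow_oriented dxy dxy' nxx' nadj yy'.
have Ax'y' : A x' y'.
  apply: married_arrow_oriented dxy' dxy _ _ _; rewrite 1?eq_sym 1?(adjacent_sym hG) //.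
  by rewrite (sym_connect_sym (gu_sym hG)).
have gp : good_upath H A x x' y y'.
  exists p; rewrite p_last eqxx p_uniq /=; apply/andP; split.
    by apply: sub_path p_path => a b; apply: gu_undir cr_arrows_gd.
  by apply: sub_all p_far => z; rewrite !H_adj.
split; apply/final_dirP; split => //.
  by exists x', y'; split => //; left.
by exists x, y; split; rewrite 1?eq_sym //; right.
Qed.

Lemma induced_pattern_labelled (f : nat -> T) i j : i < j ->
  {in [pred k | i <= k <= j.+1] &, injective f} ->
  (forall k l, i <= k <= j.+1 -> i <= l <= j.+1 -> adj (f k) (f l) -> (l == k.+1) || (k == l.+1)) ->
  gd (f i) (f i.+1) -> gd (f j.+1) (f j) -> (forall k, i < k < j -> gu (f k) (f k.+1)) ->
  fd (f i) (f i.+1) /\ fd (f j.+1) (f j).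
Proof.
move=> lt_ij f_inj f_adj dfi dfj uf.
have far k l : i <= k <= j.+1 -> i <= l <= j.+1 -> k.+1 < l -> ~~ adj (f k) (f l).
  by move=> hk hl lt_kl; apply/negP => /(f_adj _ _ hk hl) /orP [] /eqP; lia.
set m := j - i.+1.
apply: (pattern_arrows_labelled (p := map f (iota i.+2 m))) => //.
- apply/eqP => /f_inj; rewrite !inE; lia.
- by apply: far; lia.
- by apply: path_map_iota => k hk; apply: uf; lia.
- by rewrite last_map_iota; congr f; lia.
- rewrite -[_ :: _]/(map f (iota i.+1 m.+1)) map_inj_in_uniq ?iota_uniq // => k l.
  by rewrite !mem_iota => hk hl; apply: f_inj; rewrite inE; lia.
rewrite size_map size_iota -map_take take_iota all_map; apply/allP => k.
rewrite mem_iota => hk /=; rewrite [adj (f j.+1) _](adjacent_sym hG).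
by apply/andP; split; apply: far; lia.
Qed.

Section FinalComplex.
Variables (a b : T) (vs : seq T).
Local Notation n := (size vs).
Local Notation c := (cvert a b vs).

Lemma complex_pattern_labelled (d u : rel T) i j :
  min_complex d u a b vs -> adjacent d u =2 adj -> i < j <= n ->
  gd (c i) (c i.+1) -> gd (c j.+1) (c j) -> (forall k, i < k < j -> gu (c k) (c k.+1)) ->
  fd (c i) (c i.+1) /\ fd (c j.+1) (c j).
Proof.
move=> hmc adj_eq /andP [lt_ij le_jn]; apply: induced_pattern_labelled lt_ij _ _.
  by move=> x y; rewrite !inE => hx hy /eqP; rewrite (cvert_inj hmc) => [/eqP||]; lia.
by move=> k l hk hl; rewrite -adj_eq; apply: (min_complex_adjacent hmc); lia.
Qed.

Lemma final_complex_inner_gu k : min_complex fd fu a b vs -> 0 < k < n -> gu (c k) (c k.+1).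
Proof.
move=> hmc lt_k.
have adj_next l : l <= n -> adj (c l) (c l.+1).
  by move=> le_l; rewrite -final_adjacent; apply: min_complex_adjacent_next.
pose P : pred nat := fun l => gd (c l) (c l.+1).
pose Q : pred nat := fun l => gd (c l.+1) (c l).
have ends i j : i < j <= n -> P i -> Q j -> (forall l, i < l < j -> ~~ P l && ~~ Q l) ->
    i = 0 /\ j = n.
  move=> hij Pi Qj between.
  have [] := complex_pattern_labelled hmc final_adjacent hij Pi Qj.
    move=> l hl; have /andP [nPl nQl] := between l hl.
    by rewrite (gu_adjacent hG) adj_next ?nPl ?nQl //; lia.
  by rewrite !(min_complex_dir hmc) //; lia.
have /or3P [Pk | Qk | //] : adj (c k) (c k.+1) by apply: adj_next; lia.
- have Qn : Q n by apply: final_dir_gd; rewrite (min_complex_dir hmc) ?eqxx ?orbT //; lia.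
  have [|i [j [le_ki + Pi Qj between]]] := @innermost_pair P Q k n _ Pk Qn; first lia.
  by move=> hij; have [] := ends i j hij Pi Qj between; lia.
- have P0 : P 0 by apply: final_dir_gd; rewrite (min_complex_dir hmc) //; lia.
  have [|i [j [_ + Pi Qj between]]] := @innermost_pair P Q 0 k _ P0 Qk; first lia.
  by move=> hij; have [|] := ends i j _ Pi Qj between; lia.
Qed.

Lemma min_complex_final_of_graph : min_complex gd gu a b vs -> min_complex fd fu a b vs.
Proof.
move=> hmc; have [fa fb] : fd (c 0) (c 1) /\ fd (c n.+1) (c n).
  apply: (complex_pattern_labelled (i := 0) (j := n) hmc (fun _ _ => erefl)).
  - by rewrite (size_complex_gt0 hmc) leqnn.
  - by rewrite (min_complex_dir hmc).
  - by rewrite (min_complex_dir hmc) ?eqxx ?orbT ?leqnSn.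
  - exact: min_complex_und hmc.
apply: (min_complex_transfer hmc _ final_und_sym final_adjacent).
- move=> x y fxy; rewrite /final_und /undir fxy andbF andbT.
  by apply/negP => /final_dir_gd; rewrite (gd_asym hG (final_dir_gd fxy)).
- by rewrite (head_cvert hmc).
- by rewrite (last_cvert hmc); move: fb; rewrite cvert_last.
by move=> x y /(min_complex_consec hmc); apply: gu_undir final_dir_gd.
Qed.

Lemma min_complex_graph_of_final : min_complex fd fu a b vs -> min_complex gd gu a b vs.
Proof.
move=> hmc; apply: (min_complex_transfer hmc _ (gu_sym hG)).
- by move=> x y dxy; rewrite (gd_asym hG dxy) (gd_not_gu hG dxy).
- by move=> x y; rewrite final_adjacent.
- exact/final_dir_gd/(min_complex_head hmc).
- exact/final_dir_gd/(min_complex_last hmc).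
move=> x y /(consec_cvert a b) [k lt_k [] [-> ->]]; last rewrite (gu_sym hG).
all: exact: final_complex_inner_gu.
Qed.

End FinalComplex.

End ComplexRecovery.

Theorem lemma2 (T : finType) (gd gu : rel T) (CI : ci_oracle T) :
  is_LWF_CG gd gu ->
  (forall A B S : {set T},
      [disjoint A & B] -> [disjoint A & S] -> [disjoint B & S] ->
      (CI A B S <-> c_separates gd gu A B S)) ->
  forall (H : rel T) (sep : T -> T -> {set T}) (ord : seq (T * T * T)) (A : rel T),
    skeleton_run CI H sep ->
    cr_order H ord ->
    cr_run CI H sep (fun _ _ => false) ord A ->
    (forall x y, adjacent (final_dir H A) (final_und H A) x y = adjacent gd gu x y) /\
    (forall (a b : T) (vs : seq T),
        min_complex (final_dir H A) (final_und H A) a b vs <-> min_complex gd gu a b vs).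
Proof.
move=> hG faithful H sep ord A run hord hrun.
have [[_ _ _ /= sepH] H_adj] := skeleton_run_adjacent hG faithful run.
split; first exact: (final_adjacent hG faithful H_adj sepH hord hrun).
move=> a b vs; split.
  exact: (min_complex_graph_of_final hG faithful H_adj sepH hord hrun).
exact: (min_complex_final_of_graph hG faithful H_adj sepH hord hrun).
Qed.
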